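(* Let $k\ge 1$, $0\le r<k$ and $n\ge 1$ be integers, and let $$A_n(k,r,x)=\left(\binom{i-k+1+r}{j}x^k+\binom{i+1+r}{j+1}\right)_{i,j=0}^{n-1}.$$ Then $x^r\det A_n(k,r,x)=F^{(k)}_{kn+r}(x)$.
   Context: Binomial coefficients are the generalized ones: for an integer $m$ (possibly negative) and an integer $j$, $\binom{m}{j}=\frac{m(m-1)\cdots(m-j+1)}{j!}$ if $j\ge 0$ and $\binom{m}{j}=0$ if $j<0$. For an integer $k\ge1$, the generalized Fibonacci polynomials $F^{(k)}_n(x)\in\mathbb{Z}[x]$ ($n\ge0$) are defined by $F^{(k)}_n(x)=x^n$ for $0\le n<k$ and $F^{(k)}_n(x)=xF^{(k)}_{n-1}(x)+F^{(k)}_{n-k}(x)$ for $n\ge k$; equivalently $F^{(k)}_n(x)=\sum_{j=0}^{\lfloor n/k\rfloor}\binom{n-(k-1)j}{j}x^{n-kj}$. *)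

From HB Require Import structures.
From mathcomp Require Import all_boot all_order all_algebra.
Set Implicit Arguments. Unset Strict Implicit. Unset Printing Implicit Defensive.
Import Order.TTheory GRing.Theory Num.Theory.
Local Open Scope ring_scope.

(* Generalized binomial coefficient binom(m, j) for m : int, j : int:
   m(m-1)...(m-j+1)/j! if j >= 0, and 0 if j < 0.  The division is exact. *)
Definition gbin (m j : int) : int :=
  match j with
  | Posz j' => ((\prod_(l < j') (m - (l : nat)%:Z)) %/ (j'`!)%:Z)%Z
  | Negz _ => 0
  end.

(* F^{(k)}_n(x): x^n for n < k, x F_{n-1} + F_{n-k} for n >= k.
   Defined with fuel; fibF k n.+1 n is enough fuel when k >= 1. *)
Fixpoint fibF (k fuel n : nat) : {poly int} :=
  match fuel with
  | 0 => 0
  | fuel'.+1 =>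
      if (n < k)%N then 'X^n
      else 'X * fibF k fuel' (n - 1)%N + fibF k fuel' (n - k)%N
  end.

Definition Fib (k n : nat) : {poly int} := fibF k n.+1 n.

Definition Amat (k r n : nat) : 'M[{poly int}]_n :=
  \matrix_(i < n, j < n)
    ((gbin (i%:Z - k%:Z + 1 + r%:Z) j)%:P * 'X^k
     + (gbin (i%:Z + 1 + r%:Z) (j%:Z + 1))%:P).

(* Read row i of A_n(k, r, x) as the coefficient list of a power series in a
   new variable X: it is x^k (1 + X)^(i-k+1+r) + ((1 + X)^(i+1+r) - 1) / X, so X
   times it equals (1 + X)^i e - 1 with e = (1 + X)^(r+1-k) (x^k X + (1 + X)^k).
   Multiplying A_n on the right by the Toeplitz matrix of e^-1 and on the left
   by the binomial-inversion matrix, both unitriangular, turns it into a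
   companion matrix of determinant (-1)^n [X^n] e^-1.  On the other hand the
   recurrence of F^(k) gives (\sum_m (-1)^m F^(k)_(km+r) X^m) e = x^r, hence
   x^r [X^n] e^-1 = (-1)^n F^(k)_(kn+r).  All series are truncated at X^(n+1). *)

From HB Require Import structures.
From mathcomp Require Import all_boot all_order all_algebra.
From mathcomp Require Import zify ring.
From Corelib Require Import Setoid.
Import GRing.Theory.
Local Open Scope ring_scope.

Definition ffactz (m : int) (j : nat) : int := \prod_(l < j) (m - l%:Z).

Lemma ffactzS (m : int) (j : nat) :
  ffactz (m + 1) j.+1 = ffactz m j.+1 + j.+1%:Z * ffactz m j.
Proof.
rewrite /ffactz big_ord_recl big_ord_recr /=.
under eq_bigr => i _ do rewrite /bump /= add1n -addn1 PoszD opprD addrACA subrr addr0.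
rewrite subr0 -[in RHS](addn1 j) PoszD; ring.
Qed.

Lemma dvdz_fact_ffactz (m : int) (j : nat) : (j`!%:Z %| ffactz m j)%Z.
Proof.
elim: j m => [|j IHj] m; first by rewrite /ffactz big_ord0 dvdzz.
have dvd_last m' : (j.+1`!%:Z %| j.+1%:Z * ffactz m' j)%Z.
  by rewrite factS PoszM dvdz_mul.
have dvd0 : (j.+1`!%:Z %| ffactz 0 j.+1)%Z.
  by rewrite /ffactz big_ord_recl /= subr0 mul0r dvdz0.
elim/int_rec: m => [//|a IHa|a IHa].
  by rewrite -addn1 PoszD ffactzS rpredD.
have -> : ffactz (- a.+1%:Z) j.+1
    = ffactz (- a.+1%:Z + 1) j.+1 - j.+1%:Z * ffactz (- a.+1%:Z) j.
  by rewrite ffactzS addrK.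
by rewrite -addn1 PoszD opprD addrNK rpredB.
Qed.

Lemma gbinE (m : int) (j : nat) : gbin m j = (ffactz m j %/ j`!%:Z)%Z.
Proof. by []. Qed.

Lemma gbinz0 (m : int) : gbin m 0 = 1.
Proof. by rewrite gbinE /ffactz big_ord0 divz1. Qed.

Lemma gbin0S (j : nat) : gbin 0 j.+1 = 0.
Proof. by rewrite gbinE /ffactz big_ord_recl /= subr0 mul0r div0z. Qed.

Lemma gbinS (m : int) (j : nat) : gbin (m + 1) j.+1 = gbin m j.+1 + gbin m j.
Proof.
rewrite !gbinE ffactzS divzDl ?dvdz_fact_ffactz //.
by rewrite factS PoszM divzMpl.
Qed.

Section EqModX.
Context {R : comNzRingType} {N : nat}.

Definition eqmodX (p q : {poly R}) := forall j, (j < N)%N -> p`_j = q`_j.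

#[global] Instance eqmodX_equiv : Equivalence eqmodX.
Proof.
split=> [p j|p q pq j jN|p q s pq qs j jN] //; first by rewrite pq.
by rewrite pq ?qs.
Qed.

Lemma eqmodXD (p q p' q' : {poly R}) :
  eqmodX p q -> eqmodX p' q' -> eqmodX (p + p') (q + q').
Proof. by move=> pq pq' j jN; rewrite !coefD pq ?pq'. Qed.

Lemma eqmodXN (p q : {poly R}) : eqmodX p q -> eqmodX (- p) (- q).
Proof. by move=> pq j jN; rewrite !coefN pq. Qed.

Lemma eqmodXMr (s : {poly R}) {p q : {poly R}} : eqmodX p q -> eqmodX (p * s) (q * s).
Proof.
move=> pq j jN; rewrite !coefM; apply: eq_bigr => i _.
by rewrite pq //; apply: leq_ltn_trans jN; rewrite -ltnS.
Qed.

Lemma eqmodXMl (s : {poly R}) {p q : {poly R}} : eqmodX p q -> eqmodX (s * p) (s * q).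
Proof. by rewrite ![s * _]mulrC; apply: eqmodXMr. Qed.

Lemma eqmodXZ (c : R) (p q : {poly R}) : eqmodX p q -> eqmodX (c *: p) (c *: q).
Proof. by move=> pq j jN; rewrite !coefZ pq. Qed.

Lemma eqmodX_sum (I : finType) (f g : I -> {poly R}) :
  (forall i, eqmodX (f i) (g i)) -> eqmodX (\sum_i f i) (\sum_i g i).
Proof. by move=> fg j jN; rewrite !coef_sum; apply: eq_bigr => i _; rewrite fg. Qed.

Lemma coef_expr_small (u : {poly R}) (a j : nat) :
  u`_0 = 0 -> (j < a)%N -> (u ^+ a)`_j = 0.
Proof.
move=> u0; elim: a j => [|a IHa] j //; rewrite ltnS => ja.
rewrite exprSr coefM big1 // => i _.
have [ia|ai] := ltnP i a; first by rewrite IHa // mul0r.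
have -> : (i : nat) = j by apply/eqP; rewrite eqn_leq -ltnS ltn_ord (leq_trans ja ai).
by rewrite subnn u0 mulr0.
Qed.

(* A truncated geometric series in [1 - e]. *)
Lemma eqmodX_inverse (e : {poly R}) : e`_0 = 1 -> exists g, eqmodX (g * e) 1.
Proof.
move=> e0; set u := 1 - e; exists (\sum_(i < N) u ^+ i).
have -> : (\sum_(i < N) u ^+ i) * e = 1 - u ^+ N.
  by rewrite -[RHS]opprB subrX1 -mulNr mulrC /u; congr (_ * _); ring.
move=> j jN; rewrite coefB coef_expr_small ?subr0 //.
by rewrite /u coefB coefC e0 subrr.
Qed.

End EqModX.
Arguments eqmodX {R} N p q.

Section BinomialSeries.
Variables (R : comNzRingType) (N : nat).

Definition binser (m : int) : {poly R} := \poly_(j < N) (gbin m j)%:~R.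

(* Truncation of ((1 + X)^m - 1) / X. *)
Definition binser_tail (m : int) : {poly R} := \poly_(j < N) (gbin m j.+1)%:~R.

Lemma binser0 : eqmodX N (binser 0) 1.
Proof.
by move=> [|j] jN; rewrite coef_poly jN coef1 ?gbinz0 ?gbin0S.
Qed.

Lemma binserS (m : int) : eqmodX N ((1 + 'X) * binser m) (binser (m + 1)).
Proof.
move=> j jN; rewrite mulrDl mul1r coefD coefXM !coef_poly jN.
case: j jN => [|j] jN; first by rewrite !gbinz0 addr0.
by rewrite [_.+1.-1]/= (ltnW jN) gbinS intrD.
Qed.

Lemma binserD (m : int) (a : nat) :
  eqmodX N ((1 + 'X) ^+ a * binser m) (binser (m + a%:Z)).
Proof.
elim: a => [|a IHa]; first by rewrite expr0 mul1r addr0.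
rewrite exprS -mulrA -addn1 PoszD addrA.
by transitivity ((1 + 'X) * binser (m + a)); [apply: eqmodXMl | apply: binserS].
Qed.

Lemma binser_nat (a : nat) : eqmodX N (binser a%:Z) ((1 + 'X) ^+ a).
Proof.
rewrite -[a%:Z]add0r; symmetry; transitivity ((1 + 'X) ^+ a * binser 0).
  by rewrite -{1}[(1 + 'X) ^+ a]mulr1; apply: eqmodXMl; symmetry; apply: binser0.
exact: binserD.
Qed.

Lemma binserN (a : nat) : eqmodX N (binser (- a%:Z) * (1 + 'X) ^+ a) 1.
Proof.
rewrite mulrC; transitivity (binser (- a%:Z + a%:Z)); first exact: binserD.
by rewrite addNr; apply: binser0.
Qed.

Lemma binser_tailE (m : int) : eqmodX N ('X * binser_tail m) (binser m - 1).
Proof.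
move=> [|j] jN; rewrite coefXM coefB coef1 !coef_poly jN.
  by rewrite gbinz0 subrr.
by rewrite [_.+1.-1]/= (ltnW jN) subr0.
Qed.

End BinomialSeries.
Arguments binser {R} N m.
Arguments binser_tail {R} N m.

Lemma fibF_fuel (k f1 f2 n : nat) : (1 <= k)%N -> (n < f1)%N -> (n < f2)%N ->
  fibF k f1 n = fibF k f2 n.
Proof.
move=> k_gt0; elim: f1 f2 n => [|f1 IHf] [|f2] n //= nf1 nf2.
case: ifP => // /negbT nk.
rewrite (IHf f2) ?(IHf f2 (n - k)%N) //; lia.
Qed.

Lemma Fib_small (k n : nat) : (n < k)%N -> Fib k n = 'X^n.
Proof. by move=> nk; rewrite /Fib /= nk. Qed.

Lemma FibE (k n : nat) : (1 <= k)%N -> (k <= n)%N ->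
  Fib k n = 'X * Fib k (n - 1) + Fib k (n - k).
Proof.
move=> k_gt0 kn; rewrite /Fib [fibF k n.+1 n]/= ltnNge kn /=.
rewrite (fibF_fuel k n (n - 1).+1) ?(fibF_fuel k n (n - k).+1) //; lia.
Qed.

(* Series in X whose coefficients are polynomials in the variable x of [Fib];
   [xC] is x viewed as a constant series. *)
Local Notation xC := (('X : {poly int})%:P : {poly {poly int}}).

Section FibonacciSeries.
Variables (k N : nat).
Hypothesis k_gt0 : (1 <= k)%N.

Definition fibser (r : nat) : {poly {poly int}} :=
  \poly_(m < N) ((-1) ^+ m * Fib k (k * m + r)).

(* x^r (1 + X)^(k-1-r) / fib_denom is the generating function of [fibser r]. *)
Definition fib_denom : {poly {poly int}} := ('X^k)%:P * 'X + (1 + 'X) ^+ k.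

Lemma fibserS (r : nat) : (r.+1 < k)%N ->
  eqmodX N ((1 + 'X) * fibser r.+1) (xC * fibser r).
Proof.
move=> rk [|j] jN; rewrite mulrDl mul1r coefD coefXM coefCM !coef_poly jN.
  rewrite !muln0 !add0n !Fib_small ?(ltnW rk) // addr0 !expr0 !mul1r.
  by rewrite exprS.
rewrite /= (ltnW jN) [Fib k (k * j.+1 + r.+1)]FibE //; last by lia.
have -> : (k * j.+1 + r.+1 - 1 = k * j.+1 + r)%N by lia.
have -> : (k * j.+1 + r.+1 - k = k * j + r.+1)%N by lia.
rewrite exprS; ring.
Qed.

Lemma fibser0 : eqmodX N ((1 + 'X) * fibser 0) (1 - xC * 'X * fibser k.-1).
Proof.
move=> j jN; rewrite mulrDl mul1r -mulrA coefD coefB coef1 coefCM !coefXM !coef_poly jN.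
case: j jN => [|j] jN /=.
  by rewrite muln0 Fib_small // expr0 !mul1r addr0 mulr0 subr0.
rewrite (ltnW jN) FibE //; last by lia.
have -> : (k * j.+1 + 0 - 1 = k * j + k.-1)%N by lia.
have -> : (k * j.+1 + 0 - k = k * j + 0)%N by lia.
rewrite exprS; ring.
Qed.

Lemma fibser_lift (r : nat) : (r < k)%N ->
  eqmodX N ((1 + 'X) ^+ r * fibser r) (xC ^+ r * fibser 0).
Proof.
elim: r => [|r IHr] rk; first by rewrite !expr0 !mul1r.
rewrite exprSr -mulrA.
transitivity ((1 + 'X) ^+ r * (xC * fibser r)); first exact/eqmodXMl/fibserS.
by rewrite mulrCA exprS -mulrA; apply/eqmodXMl/IHr/ltnW.
Qed.

Lemma fibser0_denom : eqmodX N (fibser 0 * fib_denom) ((1 + 'X) ^+ k.-1).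
Proof.
have kE : k = k.-1.+1 by rewrite prednK.
have k1k : (k.-1 < k)%N by rewrite ltn_predL.
have lift := fibser_lift k.-1 k1k.
have fibser0_lift : eqmodX N ((1 + 'X) ^+ k * fibser 0)
    ((1 + 'X) ^+ k.-1 - xC ^+ k * 'X * fibser 0).
  rewrite {1}kE exprSr -mulrA.
  transitivity ((1 + 'X) ^+ k.-1 * (1 - xC * 'X * fibser k.-1)).
    exact/eqmodXMl/fibser0.
  have -> : (1 + 'X) ^+ k.-1 * (1 - xC * 'X * fibser k.-1)
      = (1 + 'X) ^+ k.-1 - xC * 'X * ((1 + 'X) ^+ k.-1 * fibser k.-1) by ring.
  apply: eqmodXD; first reflexivity.
  apply/eqmodXN; transitivity (xC * 'X * (xC ^+ k.-1 * fibser 0)).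
    exact: eqmodXMl.
  by have -> : xC * 'X * (xC ^+ k.-1 * fibser 0) = xC ^+ k * 'X * fibser 0
    by rewrite {2}kE exprS; ring.
have -> : fibser 0 * fib_denom
    = ('X^k)%:P * 'X * fibser 0 + (1 + 'X) ^+ k * fibser 0 by rewrite /fib_denom; ring.
transitivity (('X^k)%:P * 'X * fibser 0
    + ((1 + 'X) ^+ k.-1 - xC ^+ k * 'X * fibser 0)).
  by apply: eqmodXD; first reflexivity.
by rewrite rmorphXn addrC subrK.
Qed.

End FibonacciSeries.

Lemma fibser_mul (k N r : nat) : (r < k)%N ->
  eqmodX N (fibser k N r * (binser N (r%:Z + 1 - k%:Z) * fib_denom k)) (xC ^+ r).
Proof.
move=> rk; have k_gt0 : (0 < k)%N by apply: leq_ltn_trans rk.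
set w := binser N (r%:Z + 1 - k%:Z); pose u : {poly {poly int}} := binser N (- r%:Z).
have uK : eqmodX N (u * (1 + 'X) ^+ r) 1 by apply: binserN.
transitivity (u * ((1 + 'X) ^+ r * fibser k N r) * (w * fib_denom k)).
  have -> : u * ((1 + 'X) ^+ r * fibser k N r) * (w * fib_denom k)
      = u * (1 + 'X) ^+ r * (fibser k N r * (w * fib_denom k)) by ring.
  rewrite -[X in eqmodX _ X _]mul1r; symmetry; exact: eqmodXMr uK.
transitivity (u * (xC ^+ r * fibser k N 0) * (w * fib_denom k)).
  by apply/eqmodXMr/eqmodXMl/fibser_lift.
have -> : u * (xC ^+ r * fibser k N 0) * (w * fib_denom k)
    = xC ^+ r * u * w * (fibser k N 0 * fib_denom k) by ring.
transitivity (xC ^+ r * u * w * (1 + 'X) ^+ k.-1).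
  exact/eqmodXMl/fibser0_denom.
have -> : xC ^+ r * u * w * (1 + 'X) ^+ k.-1
    = xC ^+ r * (u * ((1 + 'X) ^+ k.-1 * w)) by ring.
rewrite -[X in eqmodX _ _ X]mulr1; apply: eqmodXMl.
transitivity (u * binser N r%:Z).
  apply: eqmodXMl; have -> : r%:Z = r%:Z + 1 - k%:Z + (k.-1)%:Z.
    by lia.
  exact: binserD.
by transitivity (u * (1 + 'X) ^+ r); first exact/eqmodXMl/binser_nat.
Qed.

Section CoefficientMatrices.
Variable R : comNzRingType.

Definition coefmx {n} (p : 'I_n -> {poly R}) : 'M[R]_n := \matrix_(i, j) (p i)`_j.

Definition toeplitz_mx n (s : {poly R}) : 'M[R]_n :=
  \matrix_(i, j) (if (i <= j)%N then s`_(j - i) else 0).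

(* Row i holds the coefficients of the binomial inversion formula
   X^i = \sum_l (-1)^(i-l) 'C(i, l) (1 + X)^l. *)
Definition binom_inv_mx n : 'M[R]_n := \matrix_(i, l) ((-1) ^+ (i - l) *+ 'C(i, l)).

Definition companion_mx n (g : {poly R}) : 'M[R]_n.+1 :=
  \matrix_(i, j) ((j.+1 == i)%:R - (i == 0%N :> nat)%:R * g`_j.+1).

Lemma coefmx_toeplitz n (p : 'I_n -> {poly R}) (s : {poly R}) :
  coefmx p *m toeplitz_mx n s = coefmx (fun i => p i * s).
Proof.
apply/matrixP => i j; rewrite !mxE coefM.
rewrite (big_ord_widen n (fun l => (p i)`_l * s`_(j - l))) ?ltn_ord // [RHS]big_mkcond.
by apply: eq_bigr => l _; rewrite !mxE ltnS; case: ifP; rewrite ?mulr0.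
Qed.

Lemma mul_mx_coefmx n (M : 'M[R]_n) (p : 'I_n -> {poly R}) :
  M *m coefmx p = coefmx (fun i => \sum_l M i l *: p l).
Proof.
apply/matrixP => i j; rewrite !mxE coef_sum; apply: eq_bigr => l _.
by rewrite mxE coefZ.
Qed.

Lemma det_toeplitz_mx n (s : {poly R}) : s`_0 = 1 -> \det (toeplitz_mx n s) = 1.
Proof.
move=> s0; rewrite -det_tr det_trig.
  by apply: big1 => i _; rewrite !mxE leqnn subnn s0.
by apply/forallP => i; apply/forallP => j; apply/implyP => ij; rewrite !mxE leqNgt ij.
Qed.

Lemma det_binom_inv_mx n : \det (binom_inv_mx n) = 1.
Proof.
rewrite det_trig; first by apply: big1 => i _; rewrite !mxE subnn binn.
by apply/forallP => i; apply/forallP => j; apply/implyP => ij; rewrite !mxE bin_small.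
Qed.

Lemma det_companion_mx n (g : {poly R}) :
  \det (companion_mx n g) = (-1) ^+ n.+1 * g`_n.+1.
Proof.
rewrite (expand_det_col _ ord_max) big_ord_recl big1 ?addr0; last first.
  move=> i _; rewrite !mxE /= eqSS.
  have -> : (n == i) = false by apply/negbTE; rewrite neq_ltn ltn_ord orbT.
  by rewrite mul0r subrr mul0r.
rewrite /cofactor; have -> : row' ord0 (col' ord_max (companion_mx n g)) = 1%:M.
  by apply/matrixP => i j; rewrite !mxE lift_max /= eqSS mul0r subr0 eq_sym.
by rewrite det1 !mxE /= mulr1 exprS sub0r mul1r !mulNr !mul1r mulrC.
Qed.

Lemma binomial_inversion n (i : 'I_n) (g : {poly R}) :
  \sum_(l < n) binom_inv_mx n i l *: ((1 + 'X) ^+ l - g)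
    = 'X ^+ i - ((i : nat) == 0%N)%:R * g.
Proof.
have trunc (F : nat -> {poly R}) :
    \sum_(l < n) F l *+ 'C(i, l) = \sum_(l < i.+1) F l *+ 'C(i, l).
  rewrite [RHS](big_ord_widen n (fun l => F l *+ 'C(i, l))) // [RHS]big_mkcond.
  by apply: eq_bigr => l _; case: ltnP => // il; rewrite bin_small // mulr0n.
under eq_bigr => l _ do rewrite mxE -mul_polyC rmorphMn rmorphXn rmorphN1 mulrBr !mulrnAl.
rewrite sumrB; congr (_ - _).
  rewrite (trunc (fun l => (-1) ^+ (i - l) * (1 + 'X) ^+ l)).
  by rewrite -exprDn addrA addNr add0r.
under eq_bigr => l _ do rewrite -mulrnAl.
rewrite -mulr_suml (trunc (fun l => (-1) ^+ (i - l))) -expr0n.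
have -> : (0 : {poly R}) ^+ i = (-1 + 1) ^+ i by rewrite addNr.
by rewrite exprDn; congr (_ * _); apply: eq_bigr => l _; rewrite expr1n mulr1.
Qed.

Lemma binom_inv_coefmx n (b : 'I_n.+1 -> {poly R}) (g : {poly R}) :
  (forall i, eqmodX n.+2 ('X * b i) ((1 + 'X) ^+ i - g)) ->
  binom_inv_mx n.+1 *m coefmx b = companion_mx n g.
Proof.
move=> Xb; rewrite mul_mx_coefmx; apply/matrixP => i j; rewrite !mxE.
have -> : (\sum_l binom_inv_mx n.+1 i l *: b l)`_j
    = (\sum_l 'X * (binom_inv_mx n.+1 i l *: b l))`_j.+1 by rewrite -mulr_sumr coefXM.
have Xsum : eqmodX n.+2 (\sum_l 'X * (binom_inv_mx n.+1 i l *: b l))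
    (\sum_l binom_inv_mx n.+1 i l *: ((1 + 'X) ^+ l - g)).
  by apply: eqmodX_sum => l; rewrite -scalerAr; apply/eqmodXZ/Xb.
rewrite (Xsum j.+1 (ltn_ord j)) (binomial_inversion _ i g) coefB coefXn.
by rewrite mulr_natl coefMn mulr_natl.
Qed.

Lemma det_coefmx_series n (a : 'I_n.+1 -> {poly R}) (e s : {poly R}) (c : R) :
  e`_0 = 1 -> eqmodX n.+2 (s * e) c%:P ->
  (forall i, eqmodX n.+2 ('X * a i) ((1 + 'X) ^+ i * e - 1)) ->
  c * \det (coefmx a) = (-1) ^+ n.+1 * s`_n.+1.
Proof.
move=> e0 se Xa; have [g ge] := @eqmodX_inverse _ n.+2 e e0.
have g0 : g`_0 = 1 by have := ge 0%N isT; rewrite coef0M e0 mulr1 coef1.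
have Xag i : eqmodX n.+2 ('X * (a i * g)) ((1 + 'X) ^+ i - g).
  transitivity (((1 + 'X) ^+ i * e - 1) * g); first by rewrite mulrA; apply: eqmodXMr.
  have -> : ((1 + 'X) ^+ i * e - 1) * g = (1 + 'X) ^+ i * (g * e) - g by ring.
  apply: eqmodXD; last reflexivity.
  by rewrite -[X in eqmodX _ _ X]mulr1; apply: eqmodXMl.
have sg : eqmodX n.+2 s (c%:P * g).
  transitivity (s * (g * e)).
    by rewrite -[X in eqmodX _ X _]mulr1; apply: eqmodXMl; symmetry.
  by rewrite mulrCA mulrC; apply: eqmodXMr.
have -> : \det (coefmx a)
    = \det (binom_inv_mx n.+1 *m (coefmx a *m toeplitz_mx n.+1 g)).
  by rewrite !det_mulmx det_binom_inv_mx det_toeplitz_mx // mul1r mulr1.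
rewrite coefmx_toeplitz (binom_inv_coefmx _ _ _ Xag) det_companion_mx.
by rewrite (sg _ (ltnSn _)) coefCM mulrCA.
Qed.

End CoefficientMatrices.
Arguments coefmx {R n} p.
Arguments det_coefmx_series {R n a e s c}.

Definition Arow (k r N i : nat) : {poly {poly int}} :=
  ('X^k)%:P * binser N (i%:Z - k%:Z + 1 + r%:Z) + binser_tail N (i%:Z + 1 + r%:Z).

Lemma Amat_coefmx (k r n : nat) : Amat k r n = coefmx (fun i : 'I_n => Arow k r n.+1 i).
Proof.
have polyC_intr (z : int) : z%:P = z%:~R :> {poly int}.
  by rewrite -[z in z%:P]intz rmorph_int.
apply/matrixP => i j; rewrite !mxE coefD coefCM !coef_poly leqW ?ltn_ord //.
by rewrite -addn1 PoszD !polyC_intr mulrC.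
Qed.

Lemma Arow_series (k r N i : nat) :
  eqmodX N ('X * Arow k r N i)
    ((1 + 'X) ^+ i * (binser N (r%:Z + 1 - k%:Z) * fib_denom k) - 1).
Proof.
pose w : {poly {poly int}} := binser N (r%:Z + 1 - k%:Z).
have wD (a : nat) (m : int) : m = r%:Z + 1 - k%:Z + a%:Z ->
    eqmodX N (binser N m) ((1 + 'X) ^+ a * w).
  by move=> ->; symmetry; apply: binserD.
rewrite mulrDr mulrCA.
transitivity (('X^k : {poly int})%:P * ('X * ((1 + 'X) ^+ i * w))
    + (w * (1 + 'X) ^+ (i + k) - 1)).
  apply: eqmodXD; first by apply/eqmodXMl/eqmodXMl/wD; lia.
  transitivity (binser N (i%:Z + 1 + r%:Z) - 1 : {poly {poly int}}).
    exact: binser_tailE.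
  by apply: eqmodXD; last reflexivity; rewrite mulrC; apply: wD; lia.
have -> : ((1 + 'X) ^+ i * (w * fib_denom k) - 1)
    = ('X^k : {poly int})%:P * ('X * ((1 + 'X) ^+ i * w))
      + (w * (1 + 'X) ^+ (i + k) - 1) by rewrite /fib_denom exprD; ring.
reflexivity.
Qed.

Theorem theorem1 (k r n : nat) (hk : (1 <= k)%N) (hr : (r < k)%N) (hn : (1 <= n)%N) :
  'X^r * \det (Amat k r n) = Fib k (k * n + r).
Proof.
case: n hn => // n _; set e := binser n.+2 (r%:Z + 1 - k%:Z) * fib_denom k.
have e0 : e`_0 = 1.
  by rewrite coef0M coef_poly gbinz0 -horner_coef0 /fib_denom !hornerE expr1n.
have fibser_e : eqmodX n.+2 (fibser k n.+2 r * e) ('X^r)%:P.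
  by rewrite rmorphXn; apply: fibser_mul.
rewrite Amat_coefmx (det_coefmx_series e0 fibser_e (Arow_series k r n.+2)).
by rewrite coef_poly ltnSn mulrA -exprMn mulrNN mulr1 expr1n mul1r.
Qed.
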